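(* Let $f\colon G\to G$ be a graph map with primitive transition matrix, and let $\widehat f\colon\widehat G\to\widehat G$ be its orientation lift to the oriented edge double. Then $\lambda_{\widehat f}=\lambda_f$, and $\widehat f$ has primitive transition matrix if and only if $f$ is not orientable.
   Context: A graph map sends vertices to vertices and edges to nondegenerate edge paths; its transition matrix has $(i,j)$ entry the number of times $f(e_j)$ crosses $e_i$ in either direction, and $\lambda_f$ denotes the spectral radius of this matrix. A nonnegative square matrix is primitive if some power has all entries positive. Fix an orientation of each edge of $G$. The oriented edge double is the graph $\widehat G$ with a map $p\colon\widehat G\to G$ bijective on vertices, with exactly two edges $e_+,e_-$ over each edge $e$ of $G$, where $p(e_+)=e$ and $p(e_-)=\overline e$ ($e$ reversed); orient $\widehat G$ by declaring each $e_\pm$ positive. Every edge path $\gamma$ in $G$ has a unique positive lift, i.e. an edge path in $\widehat G$ crossing edges only positively and projecting to $\gamma$. The orientation lift $\widehat f$ is the graph map sending $e_+$ to the positive lift of $f(e)$ and $e_-$ to the positive lift of $f(\overline e)$. A graph map is positively (resp. negatively) orientable if for some orientation of the graph every positive edge maps to an edge path crossing every edge positively (resp. negatively); it is orientable if it is positively or negatively orientable. *)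

From HB Require Import structures.
From mathcomp Require Import all_boot all_order all_algebra all_field.
Set Implicit Arguments. Unset Strict Implicit. Unset Printing Implicit Defensive.
Import Order.TTheory GRing.Theory Num.Theory.
Local Open Scope ring_scope.

(* An oriented edge (a crossing
   of an edge) is a pair (e, b) : E * bool, with b = true meaning e crossed
   positively (src -> tgt) and b = false meaning e crossed negatively, i.e.
   the reversed edge \overline e. *)

Section Graphs.
Variables (V E : finType) (src tgt : E -> V).

Definition oinit (a : E * bool) : V := if a.2 then src a.1 else tgt a.1.
Definition oterm (a : E * bool) : V := if a.2 then tgt a.1 else src a.1.

Definition edge_path_from_to (x y : V) (p : seq (E * bool)) : bool :=
  if p is a :: p' then
    [&& oinit a == x, path (fun b c => oterm b == oinit c) a p'
      & oterm (last a p') == y]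
  else false.

Definition is_graph_map (fv : V -> V) (fe : E -> seq (E * bool)) : Prop :=
  forall e, edge_path_from_to (fv (src e)) (fv (tgt e)) (fe e).

End Graphs.

Definition rev_path (E : Type) (p : seq (E * bool)) : seq (E * bool) :=
  rev (map (fun a => (a.1, ~~ a.2)) p).

Definition map_oedge (E : Type) (fe : E -> seq (E * bool)) (a : E * bool)
  : seq (E * bool) :=
  if a.2 then fe a.1 else rev_path (fe a.1).

(* Transition matrix: (i,j) entry = number of times f(e_j) crosses e_i in
   either direction.  Edges are indexed through enum_val. *)
Definition trans_mx (E : finType) (fe : E -> seq (E * bool)) : 'M[algC]_#|E| :=
  \matrix_(i, j) (count (fun a => a.1 == enum_val i) (fe (enum_val j)))%:R.

Definition eigenvalues n (A : 'M[algC]_n) : seq algC :=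
  sval (closed_field_poly_normal (char_poly A)).

Definition spectral_radius n (A : 'M[algC]_n) : algC :=
  \big[Num.max/0]_(z <- eigenvalues A) `|z|.

Definition primitive n (A : 'M[algC]_n) : Prop :=
  exists k : nat, (0 < k)%N /\ forall i j, 0 < (A ^+ k) i j.

(* Oriented edge double \hat G: same vertices, edges E * bool where
   (e,true) = e_+ lies over e and (e,false) = e_- lies over \overline e;
   every e_pm is oriented positively, so e_+ goes src e -> tgt e and
   e_- goes tgt e -> src e. *)
Definition dbl_src (V E : Type) (src tgt : E -> V) (a : E * bool) : V :=
  if a.2 then src a.1 else tgt a.1.
Definition dbl_tgt (V E : Type) (src tgt : E -> V) (a : E * bool) : V :=
  if a.2 then tgt a.1 else src a.1.

(* The projection p : \hat G -> G on edges: e_+ |-> e, e_- |-> \overline e,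
   i.e. the edge (e,b) of \hat G projects to the oriented edge (e,b) of G. *)
Definition dbl_proj (E : Type) (a : E * bool) : E * bool := a.

Definition pos_lift (E : Type) (p : seq (E * bool)) : seq ((E * bool) * bool) :=
  map (fun a => (a, true)) p.

Definition orient_lift_v (V : Type) (fv : V -> V) : V -> V := fv.
Definition orient_lift_e (E : Type) (fe : E -> seq (E * bool))
  (a : E * bool) : seq ((E * bool) * bool) :=
  pos_lift (map_oedge fe a).

(* Orientability.  An orientation of G is recorded relative to the fixed one
   by o : E -> bool (the positive direction of e is (e, o e)). *)
Definition positively_orientable (E : Type) (fe : E -> seq (E * bool)) : Prop :=
  exists o : E -> bool, forall e,
    all (fun a => a.2 == o a.1) (map_oedge fe (e, o e)).
Definition negatively_orientable (E : Type) (fe : E -> seq (E * bool)) : Prop :=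
  exists o : E -> bool, forall e,
    all (fun a => a.2 != o a.1) (map_oedge fe (e, o e)).
Definition orientable (E : Type) (fe : E -> seq (E * bool)) : Prop :=
  positively_orientable fe \/ negatively_orientable fe.

(* The transition matrix of \hat f lifts that of f along the projection
   E * bool -> E: summing it over the fibre of either index gives back the
   transition matrix of f.  Pulling a left eigenvector of f back along the
   projection gives one of \hat f for the same eigenvalue, so
   lambda_f <= lambda_\hat f.  Conversely, if w is a left eigenvector of \hat f
   for z, the fibre sums u of |w| satisfy |z| u <= u M_f, and the
   Collatz-Wielandt bound gives |z| <= lambda_f.

   The transition graph of \hat f is invariant under exchanging the two sheets,
   and walks of f lift to walks of \hat f with a prescribed sheet at either
   end.  If f is primitive with exponent m but \hat f is not, then at the times
   2m and 2m+1 only one sheet over a fixed edge e0 can reach the positive sheet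
   of e0.  Orienting every edge by the sheet from which (e0, +) is reached in
   m steps then makes each crossing in f(e) either always agree or always
   disagree with the orientation, i.e. f is orientable.  Conversely, for an
   orientable f the side at the end of a walk is determined by the side at its
   start and the parity of its length, which rules out primitivity. *)

From Pilot Require Import Defs.
From HB Require Import structures.
From mathcomp Require Import all_boot all_order all_algebra all_field.
From mathcomp Require Import ring.
Import Order.TTheory GRing.Theory Num.Theory.
Local Open Scope ring_scope.
Set Implicit Arguments. Unset Strict Implicit. Unset Printing Implicit Defensive.

Section SpectralRadius.
Variable n : nat.
Implicit Type A : 'M[algC]_n.

Lemma char_poly_eigenvalues A :
  char_poly A = \prod_(z <- eigenvalues A) ('X - z%:P).
Proof.
rewrite /eigenvalues; case: closed_field_poly_normal => r /= ->.
by rewrite (monicP (char_poly_monic A)) scale1r.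
Qed.

Lemma mem_eigenvalues A z : (z \in eigenvalues A) = eigenvalue A z.
Proof. by rewrite eigenvalue_root_char char_poly_eigenvalues root_prod_XsubC. Qed.

Lemma spectral_radius_ge0 A : 0 <= spectral_radius A.
Proof.
rewrite /spectral_radius; elim/big_ind: _ => // x y x0 y0.
by rewrite comparable_le_max ?x0 // real_comparable ?ger0_real.
Qed.

Lemma norm_le_spectral_radius A z : eigenvalue A z -> `|z| <= spectral_radius A.
Proof.
rewrite -mem_eigenvalues /spectral_radius; elim: (eigenvalues A) => //= y s IH.
rewrite big_cons comparable_le_max; last first.
  by rewrite real_comparable ?normr_real ?bigmax_real // => x _; rewrite normr_real.
by case/predU1P=> [->|/IH ->]; rewrite ?lexx ?orbT.
Qed.

Lemma spectral_radius_le A X :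
  0 <= X -> (forall z, eigenvalue A z -> `|z| <= X) -> spectral_radius A <= X.
Proof.
move=> X0 leX; rewrite /spectral_radius big_seq; apply: bigmax_le => // z.
by rewrite mem_eigenvalues; apply: leX.
Qed.

End SpectralRadius.

Section ShiftOperators.
Variable R : comNzRingType.

(* [shift_subs L x] is [\prod_(l <- L) (S - l)] applied to [x], for the shift
   operator [S x = x \o succn]. *)
Definition shift_sub (l : R) (x : nat -> R) : nat -> R := fun d => x d.+1 - l * x d.

Definition shift_subs (L : seq R) (x : nat -> R) : nat -> R :=
  foldl (fun y l => shift_sub l y) x L.

Lemma eq_shift_subs L x y : x =1 y -> shift_subs L x =1 shift_subs L y.
Proof.
elim: L x y => [|l L IH] x y exy //=; apply: IH => d.
by rewrite /shift_sub !exy.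
Qed.

Lemma shift_subs_mx_exp n p (A : 'M[R]_n.+1) (u : 'rV_n.+1) (B : 'M_(n.+1, p)) j L d :
  shift_subs L (fun d => (u *m A ^+ d *m B) 0 j) d =
  (u *m A ^+ d *m (horner_mx A (\prod_(l <- L) ('X - l%:P)) *m B)) 0 j.
Proof.
elim: L B d => [|l L IH] B d /=; first by rewrite big_nil rmorph1 mul1mx.
have shiftE : shift_sub l (fun d => (u *m A ^+ d *m B) 0 j)
    =1 (fun d => (u *m A ^+ d *m ((A - l%:M) *m B)) 0 j).
  move=> e; rewrite /shift_sub mulmxBl mul_scalar_mx mulmxBr -scalemxAr.
  by rewrite exprSr -mulmxE !mulmxA !mxE.
rewrite (eq_shift_subs _ shiftE) IH big_cons mulrC rmorphM rmorphB /=.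
by rewrite horner_mx_X horner_mx_C -!mulmxE !mulmxA.
Qed.

End ShiftOperators.

Lemma shift_subs_bound (R : numFieldType) (r s : R) (L : seq R) (x : nat -> R) :
  0 <= r -> r < s -> (forall l, l \in L -> `|l| <= r) ->
  (forall d, shift_subs L x d = 0) -> exists K, forall d, `|x d| <= K * s ^+ d.
Proof.
move=> r0 rs; have sr0 : 0 < s - r by rewrite subr_gt0.
have s0 : 0 <= s := le_trans r0 (ltW rs).
elim: L x => [|l L IH] x /= leLr x0.
  by exists 0 => d; rewrite x0 normr0 mul0r.
have leL l' : l' \in L -> `|l'| <= r by move=> l'L; rewrite leLr // inE l'L orbT.
have [C leC] := IH _ leL x0.
have C0 : 0 <= C by have := leC 0%N; rewrite expr0 mulr1; apply: le_trans.
pose K := `|x 0%N| + C / (s - r).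
have KsE : K * s = r * K + C + `|x 0%N| * (s - r).
  by rewrite /K; field; rewrite gt_eqF.
exists K; elim=> [|d IHd]; first by rewrite expr0 mulr1 /K lerDl divr_ge0 // ltW.
have -> : x d.+1 = l * x d + shift_sub l x d by rewrite addrC subrK.
apply: le_trans (ler_normD _ _) _; rewrite normrM.
have lx : `|l| * `|x d| <= r * (K * s ^+ d) by rewrite ler_pM // leLr ?mem_head.
apply: le_trans (lerD lx (leC d)) _.
rewrite mulrA -mulrDl exprS mulrA KsE ler_wpM2r ?exprn_ge0 //.
by rewrite lerDl mulr_ge0 // ltW.
Qed.

Lemma ler_bernoulli (R : numDomainType) (q : R) n :
  1 <= q -> 1 + n%:R * (q - 1) <= q ^+ n.
Proof.
move=> q1; have q10 : 0 <= q - 1 by rewrite subr_ge0.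
elim: n => [|n IH]; first by rewrite mul0r addr0 expr0.
rewrite exprS; apply: le_trans (ler_wpM2l (le_trans ler01 q1) IH).
have -> : q * (1 + n%:R * (q - 1)) = 1 + n.+1%:R * (q - 1) + n%:R * (q - 1) * (q - 1).
  by rewrite -addn1 natrD; ring.
by rewrite lerDl !mulr_ge0.
Qed.

Lemma exprn_unbounded (R : archiNumFieldType) (q y K : R) :
  1 < q -> 0 < y -> ~ (forall d, q ^+ d * y <= K).
Proof.
move=> q1 y0 leK; have q10 : 0 < q - 1 by rewrite subr_gt0.
have K0 : 0 <= K by have := leK 0%N; rewrite expr0 mul1r; apply: le_trans; rewrite ltW.
pose d := Num.Def.archi_bound (K / ((q - 1) * y)).
have Kd : K < d%:R * ((q - 1) * y).
  rewrite -ltr_pdivrMr ?mulr_gt0 //; apply: archi_boundP.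
  by rewrite divr_ge0 // mulr_ge0 // ltW.
have : d%:R * ((q - 1) * y) <= K.
  rewrite mulrA; apply: le_trans (leK d); rewrite ler_wpM2r ?(ltW y0) //.
  by apply: le_trans (ler_bernoulli d (ltW q1)); rewrite lerDr.
by move/(lt_le_trans Kd); rewrite ltxx.
Qed.

Lemma subinvariant_exp (R : numDomainType) n (A : 'M[R]_n) (u : 'rV_n) c :
  (forall i j, 0 <= A i j) -> 0 <= c -> (forall j, c * u 0 j <= (u *m A) 0 j) ->
  forall d j, c ^+ d * u 0 j <= (u *m A ^+ d) 0 j.
Proof.
move=> A0 c0 leAu; elim=> [|d IH] j; first by rewrite expr0 mul1r mulmx1.
have -> : A ^+ d.+1 = A ^+ d *m A by rewrite exprSr.
rewrite mulmxA exprSr -mulrA.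
apply: le_trans (ler_wpM2l (exprn_ge0 d c0) (leAu j)) _.
rewrite !mxE mulr_sumr; apply: ler_sum => i _.
by rewrite mulrA ler_wpM2r.
Qed.

Lemma collatz_wielandt_le n (A : 'M[algC]_n) (u : 'rV_n) c :
  (forall i j, 0 <= A i j) -> (forall j, 0 <= u 0 j) -> u != 0 -> 0 <= c ->
  (forall j, c * u 0 j <= (u *m A) 0 j) -> c <= spectral_radius A.
Proof.
case: n A u => [|n] A u A0 u0 nz_u c0 leAu.
  by case/eqP: nz_u; apply/rowP => -[].
have [j uj0] : exists j, 0 < u 0 j.
  apply/existsP; apply: contraNT nz_u => /existsPn u_ngt0.
  apply/eqP/rowP => i; rewrite mxE.
  by have := u0 i; rewrite le_eqVlt (negbTE (u_ngt0 i)) orbF => /eqP <-.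
have rho0 := spectral_radius_ge0 A.
rewrite real_leNgt ?ger0_real //; apply/negP => rho_lt_c.
(* Cayley-Hamilton makes [d |-> (u A^d)_j] a linear recurrence whose roots
   have modulus at most rho < s, so it is O(s^d); yet it is at least c^d u_j. *)
pose s := (spectral_radius A + c) / 2; have [rho_lt_s s_lt_c] := midf_lt rho_lt_c.
have s0 : 0 < s := le_lt_trans rho0 rho_lt_s.
have [K leK] : exists K, forall d, `|(u *m A ^+ d *m 1%:M) 0 j| <= K * s ^+ d.
  apply: (shift_subs_bound rho0 rho_lt_s (L := eigenvalues A)) => [l|d].
    by rewrite mem_eigenvalues; apply: norm_le_spectral_radius.
  rewrite shift_subs_mx_exp -char_poly_eigenvalues Cayley_Hamilton.
  by rewrite mul0mx mulmx0 mxE.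
apply: (exprn_unbounded (q := c / s) (y := u 0 j) (K := K)) => [||d] //.
  by rewrite ltr_pdivlMr // mul1r.
rewrite -(ler_pM2l (exprn_gt0 d s0)) mulrA -exprMn mulrCA divff ?gt_eqF // mulr1.
have leAd := subinvariant_exp A0 c0 leAu d j.
have Ad0 := le_trans (mulr_ge0 (exprn_ge0 d c0) (u0 j)) leAd.
apply: le_trans leAd _; rewrite mulrC -(ger0_norm Ad0).
by have := leK d; rewrite mulmx1.
Qed.

Section Walks.
Variable T : finType.
Implicit Types (r : rel T) (A : T -> T -> nat).

Fixpoint walk r k a b : bool :=
  if k is k'.+1 then [exists c, r a c && walk r k' c b] else a == b.

Definition primitive_rel r := exists2 k, (0 < k)%N & forall a b, walk r k a b.

Lemma walk_cat r j k a b c : walk r j a b -> walk r k b c -> walk r (j + k) a c.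
Proof.
elim: j a => [|j IH] a /=; first by move/eqP->.
case/existsP=> d /andP[rad wdb] wbc; apply/existsP; exists d.
by rewrite rad (IH _ wdb wbc).
Qed.

Fixpoint walk_count A k a b : nat :=
  if k is k'.+1 then (\sum_c A a c * walk_count A k' c b)%N else a == b.

Lemma walk_count_gt0 A r : (forall a b, (0 < A a b)%N = r a b) ->
  forall k a b, (0 < walk_count A k a b)%N = walk r k a b.
Proof.
move=> Ar; elim=> [|k IH] a b /=; first by rewrite lt0b.
rewrite lt0n sum_nat_eq0 negb_forall; apply: eq_existsb => c.
by rewrite muln_eq0 negb_or -!lt0n Ar IH.
Qed.

Definition mat_of A : 'M[algC]_#|T| :=
  \matrix_(i, j) (A (enum_val i) (enum_val j))%:R.

Lemma sum_enum_val (F : T -> algC) : \sum_(i < #|T|) F (enum_val i) = \sum_t F t.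
Proof. by rewrite -big_enum_val. Qed.

Lemma row_mul_mat_of (w : 'rV_#|T|) A b :
  (w *m mat_of A) 0 (enum_rank b) = \sum_a w 0 (enum_rank a) * (A a b)%:R.
Proof.
rewrite mxE -sum_enum_val; apply: eq_bigr => i _.
by rewrite mxE enum_rankK enum_valK.
Qed.

Lemma mat_of_exp A k : mat_of A ^+ k = mat_of (walk_count A k).
Proof.
elim: k => [|k IH]; apply/matrixP => i j.
  by rewrite !mxE /= (inj_eq enum_val_inj).
rewrite exprS IH -mulmxE !mxE /= natr_sum -sum_enum_val.
by apply: eq_bigr => l _; rewrite !mxE natrM.
Qed.

Lemma primitive_mat_ofP A r : (forall a b, (0 < A a b)%N = r a b) ->
  primitive (mat_of A) <-> primitive_rel r.
Proof.
move=> Ar; split=> [[k [k0 Ak]] | [k k0 rk]]; exists k => //.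
- by move=> a b; have := Ak (enum_rank a) (enum_rank b);
    rewrite mat_of_exp mxE !enum_rankK ltr0n (walk_count_gt0 Ar).
- by split=> // i j; rewrite mat_of_exp mxE ltr0n (walk_count_gt0 Ar).
Qed.

End Walks.

Section Lift.
Variables (T L : finType) (proj : L -> T) (A : T -> T -> nat) (B : L -> L -> nat).
Hypothesis proj_onto : forall e, exists a, proj a = e.
Hypothesis sum_fiber_row : forall e b, (\sum_(a | proj a == e) B a b)%N = A e (proj b).
Hypothesis sum_fiber_col : forall a e, (\sum_(b | proj b == e) B a b)%N = A (proj a) e.

Lemma sum_fiber (F : L -> algC) : \sum_a F a = \sum_e \sum_(a | proj a == e) F a.
Proof. exact: partition_big. Qed.

Lemma eigenvalue_lift z : eigenvalue (mat_of A) z -> eigenvalue (mat_of B) z.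
Proof.
case/eigenvalueP => v vA nz_v; apply/eigenvalueP.
pose V e := v 0 (enum_rank e).
have vAe e : \sum_t V t * (A t e)%:R = z * V e by rewrite -row_mul_mat_of vA mxE.
exists (\row_i V (proj (enum_val i))).
  apply/rowP => j; rewrite -[j]enum_valK row_mul_mat_of sum_fiber !mxE enum_valK.
  rewrite -vAe; apply: eq_bigr => e _.
  rewrite -sum_fiber_row natr_sum mulr_sumr; apply: eq_bigr => a /eqP <-.
  by rewrite mxE enum_rankK.
apply: contra_neq nz_v => w0; apply/rowP => i.
have [a pa] := proj_onto (enum_val i).
by move/rowP/(_ (enum_rank a)): w0; rewrite !mxE enum_rankK pa /V enum_valK.
Qed.

Lemma norm_eigenvalue_lift_le z :
  eigenvalue (mat_of B) z -> `|z| <= spectral_radius (mat_of A).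
Proof.
case/eigenvalueP => w wB nz_w.
have wBe b : \sum_a w 0 (enum_rank a) * (B a b)%:R = z * w 0 (enum_rank b).
  by rewrite -row_mul_mat_of wB mxE.
pose W a := `|w 0 (enum_rank a)|.
have zW b : `|z| * W b <= \sum_a W a * (B a b)%:R.
  rewrite -normrM -wBe; apply: le_trans (ler_norm_sum _ _ _) _.
  by apply: ler_sum => a _; rewrite normrM normr_nat.
apply: (collatz_wielandt_le (u := \row_i \sum_(a | proj a == enum_val i) W a)).
- by move=> i j; rewrite mxE ler0n.
- by move=> i; rewrite mxE sumr_ge0 // => a _; apply: normr_ge0.
- apply: contra_neq nz_w => u0; apply/rowP => i; rewrite mxE; apply/normr0_eq0.
  have W0 : \sum_(a | proj a == proj (enum_val i)) W a = 0.
    by move/rowP/(_ (enum_rank (proj (enum_val i)))): u0; rewrite !mxE enum_rankK.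
  rewrite -[i in w 0 i]enum_valK.
  by apply: (psumr_eq0P _ W0) => // a _; apply: normr_ge0.
- exact: normr_ge0.
move=> j; rewrite -[j]enum_valK row_mul_mat_of mxE enum_rankK mulr_sumr.
set e' := enum_val j.
have fiberE : \sum_e (\sum_(a | proj a == e) W a) * (A e e')%:R
    = \sum_(b | proj b == e') \sum_a W a * (B a b)%:R.
  transitivity (\sum_a W a * (A (proj a) e')%:R).
    rewrite sum_fiber; apply: eq_bigr => e _; rewrite mulr_suml.
    by apply: eq_bigr => a /eqP ->.
  rewrite exchange_big; apply: eq_bigr => a _.
  by rewrite -sum_fiber_col natr_sum mulr_sumr.
under [X in _ <= X]eq_bigr => e _ do rewrite mxE enum_rankK.
by rewrite fiberE; apply: ler_sum => b _; apply: zW.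
Qed.

Lemma spectral_radius_lift : spectral_radius (mat_of B) = spectral_radius (mat_of A).
Proof.
apply/le_anti/andP; split.
  exact: spectral_radius_le (spectral_radius_ge0 _) norm_eigenvalue_lift_le.
apply: spectral_radius_le (spectral_radius_ge0 _) _ => z /eigenvalue_lift.
exact: norm_le_spectral_radius.
Qed.

End Lift.

Definition flip (T : Type) (a : T * bool) : T * bool := (a.1, ~~ a.2).

Lemma flipK (T : Type) : involutive (@flip T).
Proof. by case=> e s; rewrite /flip negbK. Qed.

Section DoubleCover.
Variables (T : finType) (r : rel (T * bool)).
Hypothesis r_flip : forall a b, r (flip a) (flip b) = r a b.

Definition base_rel : rel T := fun e e' => [exists s, r (e, s) (e', true)].

(* Under
   [orientation o false] (resp. [true]) every [r]-step keeps (resp. switches)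
   the side: positive (resp. negative) orientability. *)
Definition side (o : T -> bool) (a : T * bool) : bool := a.2 == o a.1.

Definition orientation (o : T -> bool) (c : bool) : Prop :=
  forall a b, r a b -> side o a = side o b (+) c.

Lemma side_flip o a : side o (flip a) = ~~ side o a.
Proof. by case: a => e s; rewrite /side /=; case: s; case: (o e). Qed.

Lemma walk_flipW k a b : walk r k a b -> walk r k (flip a) (flip b).
Proof.
elim: k a => [|k IH] a /=; first by move/eqP->.
case/existsP=> c /andP[rac wcb]; apply/existsP; exists (flip c).
by rewrite r_flip rac IH.
Qed.

Lemma base_rel_lift e e' t : base_rel e e' -> exists s, r (e, s) (e', t).
Proof.
case/existsP=> s res; case: t; first by exists s.
by exists (~~ s); rewrite -r_flip /flip /= negbK.
Qed.

Lemma walk_lift k e e' t : walk base_rel k e e' -> exists s, walk r k (e, s) (e', t).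
Proof.
elim: k e => [|k IH] e /=; first by move/eqP->; exists t.
case/existsP=> c /andP[/base_rel_lift rec /IH[s wcs]].
have [s' res'] := rec s; exists s'; apply/existsP; exists (c, s).
by rewrite res' wcs.
Qed.

Lemma walk_lift_from k e e' s :
  walk base_rel k e e' -> exists t, walk r k (e, s) (e', t).
Proof.
move/walk_lift=> /(_ true)[s' ws']; have [<-|ne] := eqVneq s' s; first by exists true.
have -> : s = ~~ s' by move: ne; case: s; case: (s').
by exists false; apply: walk_flipW ws'.
Qed.

Lemma flip_side o a : ~~ side o a -> a = flip (a.1, o a.1).
Proof. by case: a => e s; rewrite /side /flip /=; case: s; case: (o e). Qed.

Lemma orientationP o c :
  orientation o c <-> forall e a, r a (e, o e) -> side o a = ~~ c.
Proof.
split=> [orient e a rae | img a b].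
  by rewrite (orient _ _ rae) /side /= eqxx.
have [/eqP sb | /flip_side ->] := boolP (side o b).
  by rewrite [b]surjective_pairing sb => /img ->.
rewrite -(flipK a) r_flip => /img; rewrite side_flip flipK.
by move/(congr1 negb); rewrite !negbK.
Qed.

Lemma walk_side o c k a b :
  orientation o c -> walk r k a b -> side o a = side o b (+) (c && odd k).
Proof.
move=> orient; elim: k a => [|k IH] a /=; first by move/eqP->; rewrite andbF addbF.
case/existsP=> d /andP[/orient-> /IH->].
by rewrite -addbA; case: (c); case: (odd k).
Qed.

Lemma walk_to_true k e y e' s :
  walk r k (e, y) (e', s) -> walk r k (e, y (+) ~~ s) (e', true).
Proof. by case: s; rewrite ?addbF ?addbT // => /walk_flipW. Qed.

Variable e0 : T.

Lemma orientation_not_primitive o c : orientation o c -> ~ primitive_rel r.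
Proof.
move=> orient [k _ wk].
have := walk_side orient (wk (e0, o e0) (e0, o e0)).
have := walk_side orient (wk (flip (e0, o e0)) (e0, o e0)).
rewrite side_flip /side /= eqxx.
by case: (c && odd k).
Qed.

Variable m : nat.
Hypotheses (m_gt0 : (0 < m)%N) (base_walk : forall e e', walk base_rel m e e').

Lemma primitive_of_returns k :
  (forall s, walk r k (e0, s) (e0, true)) -> primitive_rel r.
Proof.
move=> wk; exists (m + k + m)%N => [|[e s] [e' t]].
  by rewrite addn_gt0 m_gt0 orbT.
have [t1 w1] := walk_lift_from s (base_walk e e0).
have [s2 w2] := walk_lift t (base_walk e0 e').
have w12 : walk r k (e0, t1) (e0, s2).
  case: s2 {w2}; first exact: wk.
  by rewrite -(negbK t1); apply: walk_flipW (wk (~~ t1)).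
exact: walk_cat (walk_cat w1 w12) w2.
Qed.

Lemma orientation_of_unique_returns :
  (forall s, walk r (m + m) (e0, s) (e0, true) ->
     s = walk r (m + m) (e0, true) (e0, true)) ->
  (forall s, walk r (m + 1 + m) (e0, s) (e0, true) ->
     s = walk r (m + 1 + m) (e0, true) (e0, true)) ->
  exists o c, orientation o c.
Proof.
move=> uniq2 uniq3.
pose o e := walk r m (e, true) (e0, true).
have o_walk e : walk r m (e, o e) (e0, true).
  rewrite /o; case: (boolP (walk r m (e, true) (e0, true))) => // nw.
  by have [[] ws] := walk_lift true (base_walk e e0); rewrite // ws in nw.
have to_base a : walk r m a (e0, side o a).
  case: (boolP (side o a)) => [/eqP sa | /flip_side ->].
    by rewrite [a]surjective_pairing sa.
  exact: walk_flipW (o_walk a.1).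
(* Uniqueness for the walks e0 ~> a ~> e0 of length 2m and
   e0 ~> a -> b ~> e0 of length 2m+1 forces [side o a (+) side o b] constant. *)
exists o, (walk r (m + m) (e0, true) (e0, true)
         (+) walk r (m + 1 + m) (e0, true) (e0, true)) => -[e s] b rab.
have [y wya] := walk_lift s (base_walk e0 e).
have wab : walk r 1 (e, s) b by apply/existsP; exists b; rewrite rab /=.
rewrite -(uniq2 _ (walk_to_true (walk_cat wya (to_base _)))).
rewrite -(uniq3 _ (walk_to_true (walk_cat (walk_cat wya wab) (to_base _)))).
by case: (y); case: (side o _); case: (side o _).
Qed.

Lemma primitive_or_orientation : primitive_rel r \/ exists o c, orientation o c.
Proof.
have returns k : [forall s, walk r k (e0, s) (e0, true)] \/
    forall s, walk r k (e0, s) (e0, true) -> s = walk r k (e0, true) (e0, true).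
  have [|nret] := boolP [forall s, walk r k (e0, s) (e0, true)]; first by left.
  right=> -[] // wf.
  by apply/esym/negbTE; apply: contra nret => wt; apply/forallP => -[].
have [/forallP/primitive_of_returns|uniq2] := returns (m + m)%N; first by left.
have [/forallP/primitive_of_returns|uniq3] := returns (m + 1 + m)%N; first by left.
by right; apply: orientation_of_unique_returns.
Qed.

Lemma primitive_relP : primitive_rel r <-> ~ exists o c, orientation o c.
Proof.
split=> [prim [o [c /orientation_not_primitive]] // | no_orient].
by case: primitive_or_orientation.
Qed.

End DoubleCover.

Lemma sum_count_pred1 (T : finType) (P : pred T) (s : seq T) :
  (\sum_(x | P x) count (pred1 x) s)%N = count P s.
Proof.
elim: s => [|y s IH]; first by rewrite big1_eq.
rewrite (eq_bigr (fun x => (y == x) + count (pred1 x) s)%N) // big_split IH.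
congr (_ + _)%N.
rewrite big_mkcond (bigD1 y) // big1 => [|x /negPf nxy]; last first.
  by rewrite eq_sym nxy; case: (P x).
by rewrite eqxx /= addn0; case: (P y).
Qed.

Lemma sum_pair_fiber (T : finType) (F : T * bool -> nat) e :
  (\sum_(a | a.1 == e) F a = F (e, true) + F (e, false))%N.
Proof.
transitivity (\sum_(i | i == e) \sum_j F (i, j))%N; last first.
  by rewrite big_pred1_eq big_bool.
by rewrite pair_big_dep; apply: eq_big => -[i j] //=; rewrite andbT.
Qed.

Lemma rev_pathK (T : Type) : involutive (@Defs.rev_path T).
Proof.
move=> p; rewrite /Defs.rev_path map_rev revK -map_comp.
by rewrite (eq_map (@flipK T)) map_id.
Qed.

Lemma mem_rev_path (T : eqType) (a : T * bool) p :
  (a \in Defs.rev_path p) = (flip a \in p).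
Proof. by rewrite mem_rev -[a in LHS]flipK (mem_map (can_inj (@flipK T))). Qed.

Lemma count_rev_path (T : Type) (P : pred (T * bool)) p :
  count P (Defs.rev_path p) = count (P \o @flip T) p.
Proof. by rewrite count_rev count_map. Qed.

Section OrientationLift.
Variables (E : finType) (fe : E -> seq (E * bool)).

Lemma map_oedge_flip b : map_oedge fe (flip b) = Defs.rev_path (map_oedge fe b).
Proof. by case: b => e [] //=; rewrite rev_pathK. Qed.

Definition crosses : rel (E * bool) := fun a b => a \in map_oedge fe b.

Lemma crosses_flip a b : crosses (flip a) (flip b) = crosses a b.
Proof. by rewrite /crosses map_oedge_flip mem_rev_path flipK. Qed.

Definition lift_count (a b : E * bool) : nat := count (pred1 a) (map_oedge fe b).
Definition base_count (e e' : E) : nat := count (fun a : E * bool => a.1 == e) (fe e').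

Lemma trans_mx_base : trans_mx fe = mat_of base_count.
Proof. by []. Qed.

Lemma trans_mx_orient_lift : trans_mx (orient_lift_e fe) = mat_of lift_count.
Proof.
apply/matrixP => i j; rewrite !mxE /orient_lift_e /pos_lift count_map.
by congr (_%:R); apply: eq_count.
Qed.

Lemma lift_count_gt0 a b : (0 < lift_count a b)%N = crosses a b.
Proof. by rewrite -has_count has_pred1. Qed.

Lemma base_count_gt0 e e' : (0 < base_count e e')%N = base_rel crosses e e'.
Proof.
rewrite -has_count; apply/hasP/existsP => [[[x s] xs /eqP/= xe]|[s es]].
  by exists s; rewrite -xe.
by exists (e, s).
Qed.

Lemma lift_count_row_sum e b :
  (\sum_(a | a.1 == e) lift_count a b)%N = base_count e b.1.
Proof.
rewrite sum_count_pred1; case: b => e' [] //=.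
by rewrite count_rev_path; apply: eq_count.
Qed.

Lemma lift_count_col_sum a e' :
  (\sum_(b | b.1 == e') lift_count a b)%N = base_count a.1 e'.
Proof.
rewrite sum_pair_fiber /lift_count /= count_rev_path.
rewrite /base_count -[RHS]sum_count_pred1 sum_pair_fiber.
by case: a => e [] /=; [|rewrite addnC]; congr (_ + _)%N; apply: eq_count => -[x []].
Qed.

Lemma orientableE : orientable fe <-> exists o c, orientation crosses o c.
Proof.
have orientationE o c : orientation crosses o c <->
    forall e, all (fun a => side o a == ~~ c) (map_oedge fe (e, o e)).
  rewrite orientationP; last exact: crosses_flip.
  split=> H e; first by apply/allP => a /(H e) ->.
  by move=> a /(allP (H e)) /eqP.
split=> [[] [o Ho] | [o [[] /orientationE Ho]]].
- by exists o, false; apply/orientationE => e; rewrite (eq_all (fun a => eqb_id _)).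
- by exists o, true; apply/orientationE => e; rewrite (eq_all (fun a => eqbF_neg _)).
- by right; exists o => e; rewrite -(eq_all (fun a => eqbF_neg _)).
- by left; exists o => e; rewrite -(eq_all (fun a => eqb_id _)).
Qed.

End OrientationLift.

Theorem lemma2p4 (V E : finType) (src tgt : E -> V)
  (fv : V -> V) (fe : E -> seq (E * bool)) :
  (0 < #|E|)%N ->
  is_graph_map src tgt fv fe ->
  primitive (trans_mx fe) ->
  spectral_radius (trans_mx (orient_lift_e fe)) = spectral_radius (trans_mx fe) /\
  (primitive (trans_mx (orient_lift_e fe)) <-> ~ orientable fe).
Proof.
move=> /card_gt0P[e0 _] _.
rewrite trans_mx_base trans_mx_orient_lift (primitive_mat_ofP (base_count_gt0 fe)).
move=> -[m m_gt0 base_walk]; split.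
  apply: (@spectral_radius_lift _ _ fst) => [e||]; first by exists (e, true).
    exact: lift_count_row_sum.
  exact: lift_count_col_sum.
rewrite (primitive_mat_ofP (lift_count_gt0 fe)) orientableE.
exact: (primitive_relP (crosses_flip fe) e0 m_gt0 base_walk).
Qed.
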